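(* Let $L$ be a Lie algebra over a field, $I$ an ideal of $L$, $s\in L$, and $k\ge2$ such that $[Is^k]=(0)$. Then for every integer $t\ge2$ and all elements $a_1,\dots,a_N\in I$, where $N=kt-1$, the operator $\operatorname{ad}([a_1s^{k-1}])\cdots\operatorname{ad}([a_Ns^{k-1}])$ on $L$ is a linear combination of operators of the form \[P'\,\operatorname{ad}(s)^{k-1}\prod_{j=0}^{t-2}\big(\operatorname{ad}(a_{i+j})\operatorname{ad}(s)^{k-1}\big)\,P'',\] where $i$ is an index with $1\le i$ and $i+t-2\le N$, and $P',P''$ are (possibly empty) products of the operators $\operatorname{ad}(a_1),\dots,\operatorname{ad}(a_N),\operatorname{ad}(s)$.
   Context: $[a,b,c,\dots]$ denotes the left-normed commutator $[\cdots[[a,b],c],\dots]$, and $[ab^k]=[a,b,\dots,b]$ with $b$ repeated $k$ times; $[Is^k]$ denotes the set $\{[as^k]:a\in I\}$. $\operatorname{ad}(a)$ is the operator $x\mapsto[x,a]$; operators act on the right, so a product $uv$ of operators means first $u$ then $v$. *)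

From HB Require Import structures.
From mathcomp Require Import all_boot all_order all_algebra.
From Stdlib Require List.
Set Implicit Arguments. Unset Strict Implicit. Unset Printing Implicit Defensive.
Import GRing.Theory.
Local Open Scope ring_scope.

Definition is_lie_bracket (K : fieldType) (L : lmodType K) (br : L -> L -> L) : Prop :=
  [/\ (forall (c : K) (x y z : L), br (c *: x + y) z = c *: br x z + br y z),
      (forall (c : K) (x y z : L), br z (c *: x + y) = c *: br z x + br z y),
      (forall x : L, br x x = 0) &
      (forall x y z : L, br (br x y) z + br (br y z) x + br (br z x) y = 0)].

Definition is_lie_ideal (K : fieldType) (L : lmodType K) (br : L -> L -> L)
    (I : L -> Prop) : Prop :=
  [/\ I 0,
      (forall (c : K) (x y : L), I x -> I y -> I (c *: x + y)) &
      (forall x y : L, I x -> I (br x y))].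

Definition ad (K : fieldType) (L : lmodType K) (br : L -> L -> L) (a : L) : L -> L :=
  fun x => br x a.

(* [a b^k] = [a, b, ..., b] (b repeated k times, left-normed) *)
Definition comm_pow (K : fieldType) (L : lmodType K) (br : L -> L -> L)
    (a b : L) (k : nat) : L :=
  iter k (fun x => br x b) a.

(* Product of operators acting on the right: opprod [:: u1; ...; un] applies
   u1 first, then u2, ..., then un. *)
Definition opprod (T : Type) (s : seq (T -> T)) : T -> T :=
  fun x => foldl (fun y f => f y) x s.

Definition special_op (K : fieldType) (L : lmodType K) (br : L -> L -> L)
    (s : L) (a : nat -> L) (k t N : nat) (op : L -> L) : Prop :=
  exists (i : nat) (P1 P2 : seq (L -> L)),
    [/\ 1 <= i, i + t - 2 <= N,
        (forall u, List.In u P1 -> (u = ad br s \/ exists m, 1 <= m <= N /\ u = ad br (a m))),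
        (forall u, List.In u P2 -> (u = ad br s \/ exists m, 1 <= m <= N /\ u = ad br (a m))) &
        op = opprod (P1 ++ nseq (k - 1) (ad br s)
                     ++ flatten [seq ad br (a (i + j)) :: nseq (k - 1) (ad br s)
                                | j <- iota 0 (t - 1)]
                     ++ P2)]%N.

Definition lin_comb_of (K : fieldType) (L : lmodType K) (P : (L -> L) -> Prop)
    (op : L -> L) : Prop :=
  exists (n : nat) (c : 'I_n -> K) (ops : 'I_n -> (L -> L)),
    (forall j, P (ops j)) /\ (forall x, op x = \sum_(j < n) c j *: ops j x).

(* Since [ad [x, s] = ad x ad s - ad s ad x], each factor [ad [a_m s^(k-1)]] is a
   linear combination of the words [ad s^(p_m) ad a_m ad s^(k-1-p_m)], so the
   product is a combination of words indexed by [p_1, ..., p_N].  Between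
   [ad a_m] and [ad a_(m+1)] such a word has [k-1-p_m+p_(m+1)] letters [ad s].
   If [p_(m+1) > p_m] there are at least [k] of them, and the word vanishes
   because [[L, a_m]] lies in [I] and [[I s^k] = 0].  Otherwise [p] does not
   increase along the [N + 1 = kt] steps from [p_0 := k-1] to [p_(N+1) := 0],
   so it is constant on one of the [k] runs of [t] consecutive steps, and there
   the word has the required shape. *)

From mathcomp Require Import all_boot all_order all_algebra zify.
Set Implicit Arguments. Unset Strict Implicit. Unset Printing Implicit Defensive.
Import GRing.Theory.

Lemma nonincreasing_const_chunk (P : nat -> nat) k t :
  (forall m, P m.+1 <= P m) -> P 0 < k ->
  exists2 b, b < k & forall m, b * t <= m <= b * t + t -> P m = P (b * t).
Proof.
move=> P_dec P0_lt_k.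
have P_mono i j : i <= j -> P j <= P i.
  by apply: (@homo_leq _ P (fun x y => y <= x)) => // y x z xy yz; exact: leq_trans yz xy.
suff [b lt_bk eq_b] : exists2 b, b < k & P (b * t + t) = P (b * t).
  exists b => // m /andP[le_btm le_mbt].
  by apply/eqP; rewrite eqn_leq P_mono //= -eq_b P_mono.
have chunks c : c <= k ->
    (exists2 b, b < c & P (b * t + t) = P (b * t)) \/ P (c * t) + c <= P 0.
  elim: c => [|c IH] le_ck; first by right; rewrite mul0n addn0.
  case: (IH (ltnW le_ck)) => [[b lt_bc eq_b]|le_c].
    by left; exists b; first exact: leqW.
  have [eq_c|ne_c] := eqVneq (P (c * t + t)) (P (c * t)); first by left; exists c.
  have lt_c : P (c * t + t) < P (c * t) by rewrite ltn_neqAle ne_c P_mono ?leq_addr.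
  by right; rewrite mulSnr; lia.
by case: (chunks k (leqnn k)) => // le_k; lia.
Qed.

Section Words.
Variables (T : Type) (S : T) (A : nat -> T).

Definition block (p q : nat) (x : T) : seq T := nseq p S ++ x :: nseq q S.

Definition block_word (k : nat) (p : nat -> nat) (n : nat) : seq T :=
  flatten [seq block (p m) (k - 1 - p m) (A m) | m <- iota 1 n].

Definition gap_word (g : nat -> nat) (ms : seq nat) : seq T :=
  flatten [seq A m :: nseq (g m) S | m <- ms].

Lemma In_nseq (n : nat) (x u : T) : List.In u (nseq n x) -> u = x.
Proof. by elim: n => //= n IH [->|/IH]. Qed.

Lemma In_block p q x u : List.In u (block p q x) -> u = S \/ u = x.
Proof.
by case/(List.in_app_or (nseq p S)) => [/In_nseq|[->|/In_nseq]]; [left|right|left].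
Qed.

Lemma gap_word_cat g ms1 ms2 :
  gap_word g (ms1 ++ ms2) = gap_word g ms1 ++ gap_word g ms2.
Proof. by rewrite /gap_word map_cat flatten_cat. Qed.

Lemma blocks_gap_word (P : nat -> nat) c i n :
  flatten [seq block (P m) (c - P m) (A m) | m <- iota i n] ++ nseq (P (i + n)) S
  = nseq (P i) S ++ gap_word (fun m => c - P m + P m.+1) (iota i n).
Proof.
elim: n i => [|n IH] i /=; first by rewrite addn0 /gap_word /= cats0.
by rewrite -catA -addSnnS IH /block /gap_word /= nseqD -!catA.
Qed.

Variable N : nat.

Definition letter_ok (u : T) : Prop := u = S \/ exists m, (1 <= m <= N)%N /\ u = A m.

Definition word_ok (w : seq T) : Prop := forall u, List.In u w -> letter_ok u.

Lemma word_ok_cat w1 w2 : word_ok w1 -> word_ok w2 -> word_ok (w1 ++ w2).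
Proof. by move=> ok1 ok2 u /(List.in_app_or w1) [/ok1|/ok2]. Qed.

Lemma word_ok_nseq n : word_ok (nseq n S).
Proof. by move=> u /In_nseq ->; left. Qed.

Lemma word_ok_gap_word g ms :
  {in ms, forall m, 1 <= m <= N}%N -> word_ok (gap_word g ms).
Proof.
rewrite /gap_word; elim: ms => [|m ms IH] ms_ok u //= [<-|].
  by right; exists m; split=> //; apply: ms_ok; rewrite mem_head.
case/(List.in_app_or (nseq (g m) S)) => [/In_nseq ->|]; first by left.
by apply: IH => m' m'_ms; apply: ms_ok; rewrite inE m'_ms orbT.
Qed.

Lemma gap_word_prefix g n : (n <= N)%N ->
  exists2 X, word_ok X & nseq (g 0%N) S ++ gap_word g (iota 1 n) = X ++ nseq (g n) S.
Proof.
elim: n => [|n IH] ltnN.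
  by exists [::] => [u []|]; rewrite /gap_word /= cats0.
have [X okX eX] := IH (ltnW ltnN).
exists (X ++ nseq (g n) S ++ [:: A n.+1]).
  apply: (word_ok_cat okX); apply: word_ok_cat; first exact: word_ok_nseq.
  by move=> u [<-|[]]; right; exists n.+1.
by rewrite -[n.+1]addn1 iotaD gap_word_cat catA eX add1n addn1 /gap_word /= cats0 -!catA.
Qed.

Lemma gap_word_long_gap g m k : m \in iota 1 N -> (k <= g m)%N ->
  exists X Y, word_ok Y /\
    nseq (g 0%N) S ++ gap_word g (iota 1 N) = X ++ A m :: nseq k S ++ Y.
Proof.
move=> m_iota gm_ge.
have iota_range : {in iota 1 N, forall m, 1 <= m <= N}%N.
  by move=> m'; rewrite mem_iota add1n ltnS.
move: iota_range; case/splitPr: m_iota => l1 l2 range.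
exists (nseq (g 0%N) S ++ gap_word g l1), (nseq (g m - k) S ++ gap_word g l2); split.
  apply: word_ok_cat; first exact: word_ok_nseq.
  by apply: word_ok_gap_word => m' m'_l2; apply: range; rewrite mem_cat inE m'_l2 !orbT.
by rewrite gap_word_cat /gap_word /= -{1}(subnKC gm_ge) nseqD -!catA.
Qed.

Lemma gap_word_run g c i n :
  (1 <= i)%N -> (i + n <= N.+1)%N -> (forall m, i - 1 <= m < i + n -> g m = c)%N ->
  exists P1 P2, [/\ word_ok P1, word_ok P2 &
    nseq (g 0%N) S ++ gap_word g (iota 1 N)
    = P1 ++ nseq c S ++ flatten [seq A (i + j) :: nseq c S | j <- iota 0 n] ++ P2].
Proof.
move=> i_gt0 inN g_run.
have /(gap_word_prefix g) [X okX eX] : (i - 1 <= N)%N by lia.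
exists X, (gap_word g (iota (i + n) (N.+1 - (i + n)))); split=> //.
  by apply: word_ok_gap_word => m; rewrite mem_iota; lia.
have -> : iota 1 N = iota 1 (i - 1) ++ iota i n ++ iota (i + n) (N.+1 - (i + n)).
  rewrite {1}(_ : N = i - 1 + (n + (N.+1 - (i + n))))%N ?iotaD; last by lia.
  by congr (_ ++ iota _ _ ++ iota _ _); lia.
rewrite !gap_word_cat catA eX g_run; last by lia.
rewrite -catA; congr (_ ++ _ ++ _ ++ _).
rewrite /gap_word -[i in iota i]addn0 iotaDl -map_comp; congr flatten.
by apply/eq_in_map => j; rewrite mem_iota => jn /=; rewrite g_run //; lia.
Qed.

Lemma block_word_cases k t p :
  N.+1 = (k * t)%N -> (forall m, p m <= k - 1)%N ->
  (exists m X Y, [/\ 1 <= m <= N, word_ok Y &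
     block_word k p N = X ++ A m :: nseq k S ++ Y])%N \/
  (exists i P1 P2, [/\ 1 <= i, i + t - 2 <= N, word_ok P1, word_ok P2 &
     block_word k p N = P1 ++ nseq (k - 1) S
       ++ flatten [seq A (i + j) :: nseq (k - 1) S | j <- iota 0 (t - 1)] ++ P2])%N.
Proof.
move=> Nkt p_le.
have /andP[k_gt0 t_gt0] : (0 < k) && (0 < t) by rewrite -muln_gt0 -Nkt.
(* [P] extends [p] by the sentinels [P 0 = k - 1] and [P m = 0] for [m > N], so
   that [g m] is the number of letters [S] between [A m] and [A m.+1]. *)
pose P (m : nat) := if m == 0 then k - 1 else if m <= N then p m else 0.
pose g (m : nat) := k - 1 - P m + P m.+1.
have P_le m : P m <= k - 1 by rewrite /P; case: ifP => // _; case: ifP.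
have P_out m : N < m -> P m = 0.
  by move=> lt_Nm; rewrite /P leqNgt lt_Nm; case: m lt_Nm.
have gap_form : block_word k p N = nseq (g 0) S ++ gap_word g (iota 1 N).
  have g0 : g 0 = P 1 by rewrite /g {1}/P eqxx subnn.
  rewrite g0 -[RHS](blocks_gap_word P (k - 1)) add1n P_out // cats0.
  congr flatten; apply/eq_in_map => m; rewrite mem_iota add1n ltnS.
  by case/andP=> m_gt0 m_le; rewrite /P gtn_eqF // m_le.
rewrite gap_form.
have [/hasP[m m_iota gm_ge]|/hasPn g_lt] := boolP (has (fun m => k <= g m) (iota 1 N)).
  left; have [X [Y [ok_Y ->]]] := gap_word_long_gap m_iota gm_ge.
  by exists m, X, Y; split=> //; move: m_iota; rewrite mem_iota add1n ltnS.
right.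
have P_dec m : P m.+1 <= P m.
  have [->|m_gt0] := posnP m; first exact: P_le.
  have [m_le|lt_Nm] := leqP m N; last by rewrite P_out //; lia.
  have /g_lt : m \in iota 1 N by rewrite mem_iota; lia.
  by rewrite -ltnNge /g; have := P_le m; lia.
have P0_lt : P 0 < k by rewrite /P eqxx; lia.
have [b lt_bk P_run] := nonincreasing_const_chunk t P_dec P0_lt.
have bt_le : b * t + t <= k * t by rewrite -mulSnr leq_mul2r lt_bk orbT.
have g_run m : (b * t).+1 - 1 <= m < (b * t).+1 + (t - 1) -> g m = k - 1.
  move=> m_run; have := P_le m; rewrite /g !P_run; lia.
have run_le : (b * t).+1 + (t - 1) <= N.+1 by lia.
have [P1 [P2 [ok1 ok2 ->]]] := gap_word_run (ltn0Sn _) run_le g_run.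
by exists (b * t).+1, P1, P2; split=> //; lia.
Qed.

End Words.

Local Open Scope ring_scope.

Section LinearCombinations.
Variables (K : fieldType) (L : lmodType K).
Implicit Types (P Q : (L -> L) -> Prop) (f g : L -> L).

Lemma lin_comb_of_ext P f g : f =1 g -> lin_comb_of P f -> lin_comb_of P g.
Proof.
by move=> fg [n [c [ops [Pops ef]]]]; exists n, c, ops; split=> // x; rewrite -fg.
Qed.

Lemma lin_comb_of_gen P f : P f -> lin_comb_of P f.
Proof.
by exists 1%N, (fun=> 1), (fun=> f); split=> // x; rewrite big_ord1 scale1r.
Qed.

Lemma lin_comb_of0 P : lin_comb_of P (fun=> 0).
Proof. by exists 0%N, (fun=> 0), (fun=> id); split=> [[]|x]; rewrite ?big_ord0. Qed.

Lemma lin_comb_ofZ P c f : lin_comb_of P f -> lin_comb_of P (fun x => c *: f x).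
Proof.
move=> [n [d [ops [Pops ef]]]]; exists n, (fun j => c * d j), ops; split=> // x.
by rewrite ef scaler_sumr; apply: eq_bigr => j _; rewrite scalerA.
Qed.

Lemma lin_comb_ofD P f g :
  lin_comb_of P f -> lin_comb_of P g -> lin_comb_of P (fun x => f x + g x).
Proof.
move=> [n1 [c1 [ops1 [Pops1 ef]]]] [n2 [c2 [ops2 [Pops2 eg]]]].
pose pick T (u : 'I_n1 -> T) (v : 'I_n2 -> T) j :=
  match split j with inl i => u i | inr i => v i end.
exists (n1 + n2)%N, (pick _ c1 c2), (pick _ ops1 ops2); split.
  by move=> j; rewrite /pick; case: (split j).
move=> x; rewrite ef eg big_split_ord /pick.
by congr (_ + _); apply: eq_bigr => i _;
  [rewrite (unsplitK (inl i) : split (lshift n2 i) = inl i)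
  |rewrite (unsplitK (inr i) : split (rshift n1 i) = inr i)].
Qed.

Lemma lin_comb_of_sum P n (c : 'I_n -> K) (F : 'I_n -> L -> L) :
  (forall j, lin_comb_of P (F j)) ->
  lin_comb_of P (fun x => \sum_(j < n) c j *: F j x).
Proof.
elim: n c F => [|n IH] c F PF.
  by apply: lin_comb_of_ext (lin_comb_of0 P) => x; rewrite big_ord0.
apply: lin_comb_of_ext (lin_comb_ofD (IH _ _ (fun j => PF (widen_ord _ j)))
                                      (lin_comb_ofZ (c ord_max) (PF ord_max))).
by move=> x; rewrite big_ord_recr.
Qed.

Lemma lin_comb_of_trans P Q f :
  lin_comb_of P f -> (forall g, P g -> lin_comb_of Q g) -> lin_comb_of Q f.
Proof.
move=> [n [c [ops [Pops ef]]]] PQ.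
by apply: lin_comb_of_ext (lin_comb_of_sum c (fun j => PQ _ (Pops j))) => x.
Qed.

Lemma linear_fun0 f : linear f -> f 0 = 0.
Proof. by move=> lin_f; have := lin_f (-1) 0 0; rewrite scaler0 addr0 scaleN1r addNr. Qed.

Lemma linear_funN f x : linear f -> f (- x) = - f x.
Proof.
by move=> lin_f; rewrite -scaleN1r -[_ *: x]addr0 lin_f linear_fun0 // addr0 scaleN1r.
Qed.

Lemma linear_sumZ f n (c : 'I_n -> K) (v : 'I_n -> L) :
  linear f -> f (\sum_(j < n) c j *: v j) = \sum_(j < n) c j *: f (v j).
Proof.
move=> lin_f; elim: n c v => [|n IH] c v.
  by rewrite !big_ord0 linear_fun0.
by rewrite !big_ord_recr /= -IH addrC lin_f addrC.
Qed.

End LinearCombinations.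

Lemma opprod_cat (T : Type) (w1 w2 : seq (T -> T)) x :
  opprod (w1 ++ w2) x = opprod w2 (opprod w1 x).
Proof. by rewrite /opprod foldl_cat. Qed.

Lemma opprod_nseq (T : Type) n (f : T -> T) x : opprod (nseq n f) x = iter n f x.
Proof. by elim: n x => //= n IH x; rewrite IH -iterSr. Qed.

Section WordSpan.
Variables (K : fieldType) (L : lmodType K).

Lemma opprod_linear (w : seq (L -> L)) :
  (forall u, List.In u w -> linear u) -> linear (opprod w).
Proof.
elim: w => [|u w IH] lin_w c x y //=.
by rewrite (lin_w u (or_introl erefl)) (IH _ c) // => v wv; apply: lin_w; right.
Qed.

Definition word_span (W : seq (L -> L) -> Prop) : (L -> L) -> Prop :=
  lin_comb_of (fun f => exists2 w, W w & f =1 opprod w).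

Lemma word_span_word W w : W w -> word_span W (opprod w).
Proof. by move=> Ww; apply: lin_comb_of_gen; exists w. Qed.

Lemma word_span_letter (f : L -> L) : word_span (eq [:: f]) f.
Proof. by apply: lin_comb_of_gen; exists [:: f]. Qed.

Lemma word_span_comp (W1 W2 W : seq (L -> L) -> Prop) f g :
  (forall w2, W2 w2 -> linear (opprod w2)) ->
  (forall w1 w2, W1 w1 -> W2 w2 -> W (w1 ++ w2)) ->
  word_span W1 f -> word_span W2 g -> word_span W (fun x => g (f x)).
Proof.
move=> lin_W2 W12 [n1 [c1 [u [Wu ef]]]] [n2 [c2 [v [Wv eg]]]].
apply: lin_comb_of_ext
  (lin_comb_of_sum c2 (F := fun j x => \sum_(i < n1) c1 i *: v j (u i x)) _).
  move=> x; rewrite eg; apply: eq_bigr => j _; congr (_ *: _).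
  have [w2 W2w2 vw2] := Wv j; rewrite !vw2 ef linear_sumZ; last exact: lin_W2.
  by apply: eq_bigr => i _; rewrite vw2.
move=> j; apply: lin_comb_of_sum => i; apply: lin_comb_of_gen.
have [w1 W1w1 uw1] := Wu i; have [w2 W2w2 vw2] := Wv j.
by exists (w1 ++ w2); [exact: W12 | move=> x; rewrite opprod_cat uw1 vw2].
Qed.

End WordSpan.

Section LieAlgebra.
Variables (K : fieldType) (L : lmodType K) (br : L -> L -> L).
Hypothesis Hlie : is_lie_bracket br.

Lemma ad_linear u : linear (ad br u).
Proof. by have [linl _ _ _] := Hlie; move=> c x y; apply: linl. Qed.

Lemma br_anti x y : br x y = - br y x.
Proof.
have [linl linr alt _] := Hlie; apply/eqP; rewrite -addr_eq0.
have brD z : br z (x + y) = br z x + br z y by rewrite -[x]scale1r linr !scale1r.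
have := alt (x + y); rewrite -[x]scale1r linl !scale1r !brD !alt.
by rewrite add0r addr0 => ->.
Qed.

Lemma ad_br u v x : ad br (br u v) x = ad br v (ad br u x) - ad br u (ad br v x).
Proof.
have [_ _ _ jacobi] := Hlie; have := jacobi x u v.
have brN y : br (- y) u = - br y u by exact: (linear_funN y (ad_linear u)).
rewrite [br (br u v) x]br_anti [br v x]br_anti brN.
by move/eqP; rewrite addrAC subr_eq0 => /eqP.
Qed.

Variable s : L.

Lemma opprod_block_linear p q b : linear (opprod (block (ad br s) p q (ad br b))).
Proof.
by apply: opprod_linear => u u_in; case: (In_block u_in) => ->; apply: ad_linear.
Qed.

Lemma ad_comm_pow_span b j :
  word_span (fun w => exists p q, (p + q = j)%N /\ w = block (ad br s) p q (ad br b))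
    (ad br (comm_pow br b s j)).
Proof.
elim: j => [|j IH].
  apply: (lin_comb_of_ext (f := opprod (block (ad br s) 0 0 (ad br b)))) => //.
  by apply: word_span_word; exists 0%N, 0%N.
set u := comm_pow br b s j.
apply: (lin_comb_of_ext
  (f := fun x => ad br s (ad br u x) + (-1) *: ad br u (ad br s x))).
  by move=> x; rewrite scaleN1r -ad_br.
apply: lin_comb_ofD; last apply: lin_comb_ofZ.
  apply: word_span_comp IH (word_span_letter _) => [_ <-|_ _ [p [q [pq ->]]] <-].
    by move=> c x y; apply: ad_linear.
  exists p, q.+1; split; first by rewrite addnS pq.
  by rewrite /block -[q.+1]addn1 nseqD -catA.
apply: word_span_comp (word_span_letter _) IH => [_ [p [q [_ ->]]]|].
  exact: opprod_block_linear.
move=> _ _ <- [p [q [pq ->]]].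
by exists p.+1, q; split; first by rewrite addSn pq.
Qed.

Lemma prod_ad_comm_pow_span k (a : nat -> L) n :
  word_span (fun w => exists2 p, (forall m, p m <= k - 1)%N &
                        w = block_word (ad br s) (fun m => ad br (a m)) k p n)
    (opprod [seq ad br (comm_pow br (a m) s (k - 1)) | m <- iota 1 n]).
Proof.
elim: n => [|n IH]; first by apply: word_span_word; exists (fun=> 0%N).
apply: (lin_comb_of_ext (f := fun x => ad br (comm_pow br (a n.+1) s (k - 1))
         (opprod [seq ad br (comm_pow br (a m) s (k - 1)) | m <- iota 1 n] x))).
  by move=> x; rewrite -[n.+1]addn1 iotaD map_cat opprod_cat add1n addn1.
apply: word_span_comp IH (ad_comm_pow_span _ _) => [_ [p [q [_ ->]]]|].
  exact: opprod_block_linear.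
move=> _ _ [p p_le ->] [p' [q [pq ->]]].
exists (fun m => if m == n.+1 then p' else p m) => [m|].
  by case: eqP => _; [lia | exact: p_le].
rewrite /block_word -[n.+1]addn1 iotaD map_cat flatten_cat add1n addn1 /= eqxx cats0.
have -> : q = (k - 1 - p')%N by lia.
congr (_ ++ _); congr flatten; apply/eq_in_map => m.
by rewrite mem_iota add1n => /andP[_ /ltn_eqF ->].
Qed.

End LieAlgebra.

Section NilpotentAction.
Variables (K : fieldType) (L : lmodType K) (br : L -> L -> L) (I : L -> Prop).
Hypotheses (Hlie : is_lie_bracket br) (HI : is_lie_ideal br I).
Variables (s : L) (k : nat).
Hypothesis Hnil : forall x, I x -> comm_pow br x s k = 0.

Lemma lie_ideal_brl x b : I b -> I (br x b).
Proof.
move=> Ib; have [I0 I_lin I_br] := HI.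
by rewrite (br_anti Hlie) -scaleN1r -[_ *: _]addr0; apply: I_lin => //; apply: I_br.
Qed.

Lemma ad_word_vanishes X Y b x : I b -> linear (opprod Y) ->
  opprod (X ++ ad br b :: nseq k (ad br s) ++ Y) x = 0.
Proof.
move=> Ib lin_Y; rewrite opprod_cat /= opprod_cat opprod_nseq.
have -> : iter k (ad br s) (ad br b (opprod X x)) = 0.
  by apply: Hnil; apply: lie_ideal_brl.
exact: linear_fun0.
Qed.

End NilpotentAction.

Unset Implicit Arguments.

Theorem lemma7 (K : fieldType) (L : lmodType K) (br : L -> L -> L)
    (Hlie : is_lie_bracket br) (I : L -> Prop) (HI : is_lie_ideal br I)
    (s : L) (k : nat) (hk : (2 <= k)%N)
    (Hnil : forall x, I x -> comm_pow br x s k = 0)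
    (t : nat) (ht : (2 <= t)%N) (a : nat -> L)
    (Ha : forall m, (1 <= m <= k * t - 1)%N -> I (a m)) :
  lin_comb_of (special_op br s a k t (k * t - 1))
    (opprod [seq ad br (comm_pow br (a m) s (k - 1)) | m <- iota 1 (k * t - 1)]).
Proof.
set N := (k * t - 1)%N.
have Nkt : N.+1 = (k * t)%N by rewrite /N subn1 prednK // muln_gt0; lia.
have word_linear w : word_ok (ad br s) (fun m => ad br (a m)) N w -> linear (opprod w).
  by move=> ok_w; apply: opprod_linear => u /ok_w [->|[m [_ ->]]]; apply: ad_linear.
apply: lin_comb_of_trans (prod_ad_comm_pow_span Hlie s k a N) _ => f [w [p p_le ->] fw].
have [[m [X [Y [m_range ok_Y eW]]]]|[i [P1 [P2 [i_pos iN ok1 ok2 eW]]]]] :=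
  block_word_cases (ad br s) (fun m => ad br (a m)) Nkt p_le; rewrite {}eW in fw.
  apply: lin_comb_of_ext (lin_comb_of0 _) => x.
  by rewrite fw (ad_word_vanishes Hlie HI Hnil) //; [apply: Ha | apply: word_linear].
apply: (lin_comb_of_ext (fun x => esym (fw x))); apply: lin_comb_of_gen.
by exists i, P1, P2.
Qed.
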